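(* Let $\Phi_{\mathbf 0}(\xi,w,z)$ and $\Phi(\xi,w)=\int_\xi^\infty\int_{-1}^1\Phi_{\mathbf 0}(\eta,w,z)\,dz\,d\eta$ be as defined in the context, and put $u=\xi(1-|w|)$. Then, as $\xi\to\infty$, uniformly in $w\in(-1,1)$, \[ \Phi(\xi,w)=\frac{3}{2\pi^2}(1-u)^2\xi^{-1}+O(\xi^{-2})\quad\text{if } u\in[0,1), \] and $\Phi(\xi,w)=0$ otherwise.
   Context: For $\xi>0$ and $w,z\in(-1,1)$, $\Phi_{\mathbf 0}(\xi,w,z)=\frac{6}{\pi^2}\Upsilon\Bigl(1+\frac{\xi^{-1}-\max(|w|,|z|)-1}{|w+z|}\Bigr)$ if $w+z\neq0$; $\Phi_{\mathbf 0}(\xi,w,z)=0$ if $w+z=0$ and $\xi^{-1}<1+|w|$; $\Phi_{\mathbf 0}(\xi,w,z)=\frac{6}{\pi^2}$ if $w+z=0$ and $\xi^{-1}\ge1+|w|$. Here $\Upsilon(x)=0$ for $x\le0$, $\Upsilon(x)=x$ for $0<x<1$, $\Upsilon(x)=1$ for $x\ge1$. *)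

From HB Require Import structures.
From mathcomp Require Import all_boot all_order all_algebra.
From mathcomp Require Import all_classical all_reals all_analysis.
Set Implicit Arguments. Unset Strict Implicit. Unset Printing Implicit Defensive.
Import Order.TTheory GRing.Theory Num.Theory.
Local Open Scope classical_set_scope.
Local Open Scope ring_scope.

Definition Upsilon {R : realType} (x : R) : R :=
  if x <= 0 then 0 else if x < 1 then x else 1.

Definition Phi0 {R : realType} (xi w z : R) : R :=
  if w + z != 0 then
    6 / pi ^+ 2 * Upsilon (1 + (xi^-1 - Num.max `|w| `|z| - 1) / `|w + z|)
  else if xi^-1 < 1 + `|w| then 0 else 6 / pi ^+ 2.

Definition Phi {R : realType} (xi w : R) : \bar R :=
  (\int[lebesgue_measure]_(eta in `[xi, +oo[%classic)
     (\int[lebesgue_measure]_(z in `](-1)%R, 1%R[%classic) (Phi0 eta w z)%:E))%E.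

From HB Require Import structures.
From mathcomp Require Import all_boot all_order all_algebra.
From mathcomp Require Import all_classical all_reals all_analysis.
From mathcomp Require Import ring lra measurable_realfun.
Set Implicit Arguments. Unset Strict Implicit. Unset Printing Implicit Defensive.
Import Order.TTheory GRing.Theory Num.Theory numFieldNormedType.Exports.
Local Open Scope classical_set_scope.
Local Open Scope ring_scope.

(* Put e = 1/eta and a = 1 - |w|.  For e <= 1/2,
   Phi0(eta, w, z) = (6/pi^2) r(z) / |w + z| with r = (|w + z| - max(|w|, |z|) + e - 1)_+,
   and wherever r > 0 one has 2 - 2e <= |w + z| < 2, so Phi0 lies between
   (3/pi^2) r and (1 + 2e)(3/pi^2) r.  The function r is piecewise affine in z with
   integral J = (e^2 - a^2)_+ / 2 over (-1, 1), and the integral of J over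
   eta in [xi, oo) is (1 - u)_+^2 / (2 xi).  Hence Phi(xi, w) lies between the leading
   term L = 3 (1 - u)_+^2 / (2 pi^2 xi) and (1 + 2/xi) L, which gives both claims. *)

Section integration_tools.
Variable R : realType.
Local Notation mu := (@lebesgue_measure R).

(* Monotonicity needs no measurability here: a nonnegative integral is a
   supremum over the simple functions below the integrand. *)
Lemma ge0_le_integral_nonmeasurable (D : set R) (f g : R -> \bar R) :
  (forall x, D x -> 0 <= f x)%E -> (forall x, D x -> f x <= g x)%E ->
  (\int[mu]_(x in D) f x <= \int[mu]_(x in D) g x)%E.
Proof.
move=> f0 fg.
have g0 x : D x -> (0 <= g x)%E by move=> Dx; exact: le_trans (f0 _ Dx) (fg _ Dx).
rewrite ge0_integralE // ge0_integralE //.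
apply: ereal_sup_le => _ [h /= hf <-]; exists h => //= x.
apply: le_trans (hf x) _; rewrite /patch; case: ifP => // /set_mem; exact: fg.
Qed.

Lemma integral_cinfty_cc (f : R -> \bar R) (p q : R) :
  (forall x, q < x -> f x = 0%E) ->
  (\int[mu]_(x in `[p, +oo[) f x = \int[mu]_(x in `[p, q]) f x)%E.
Proof.
move=> f0; rewrite integral_mkcond [RHS]integral_mkcond; congr (integral _ _ _).
apply/funext => x; rewrite /patch.
have [xq|xq] := leP x q; last by rewrite f0 //; do 2 case: ifP.
suff -> : (x \in `[p, +oo[%classic) = (x \in `[p, q]%classic) by [].
by apply/idP/idP => /set_mem; rewrite /= !in_itv /= ?xq ?andbT => ?;
  apply/mem_set; rewrite /= in_itv /= ?xq ?andbT.
Qed.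

Lemma integral_cc_split (f : R -> \bar R) (p m q : R) : p <= m -> m <= q ->
  measurable_fun `[p, q]%classic f ->
  (\int[mu]_(x in `[p, q]) f x =
   \int[mu]_(x in `[p, m]) f x + \int[mu]_(x in `[m, q]) f x)%E.
Proof.
move=> pm mq mf.
have pmq : `[p, q]%classic = `[p, m]%classic `|` `]m, q]%classic :> set R.
  by apply: itv_bndbnd_setU; rewrite bnd_simp.
rewrite pmq integral_setU //; last 2 first.
- by rewrite -pmq.
- rewrite disj_set2E; apply/eqP/seteqP; split => x //=.
  by rewrite !in_itv /= => -[/andP[_ xm] /andP[mx _]]; move: (lt_le_trans mx xm); rewrite ltxx.
rewrite integral_itv_obnd_cbnd //.
by apply: measurable_funS mf => //; rewrite pmq; exact: subsetUr.
Qed.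

Lemma integral_cc_is_derive (f F : R -> R) (p q : R) : p <= q ->
  (forall x, p <= x <= q -> is_derive x 1 F (f x)) ->
  (forall x, p <= x <= q -> derivable f x 1) ->
  (\int[mu]_(x in `[p, q]) (f x)%:E = (F q - F p)%:E)%E.
Proof.
rewrite le_eqVlt => /predU1P[<- _ _|pq dF df].
  by rewrite set_itv1 integral_set1 subrr.
have cF x : p <= x <= q -> {for x, continuous F}.
  move=> /dF dFx; apply: differentiable_continuous; apply/derivable1_diffP.
  by have [] := dFx.
apply: continuous_FTC2 => //.
- apply: continuous_subspace_itv => x; rewrite in_itv/= => /df dfx.
  by apply: differentiable_continuous; apply/derivable1_diffP.
- split.
  + move=> x; rewrite in_itv/= => /andP[px xq].
    by have [] := dF x; rewrite ?ltW ?px ?xq.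
  + by apply: cvg_at_right_filter; apply: cF; rewrite lexx ltW.
  + by apply: cvg_at_left_filter; apply: cF; rewrite lexx ltW.
- move=> x; rewrite in_itv/= => /andP[px xq].
  have dFx : is_derive x 1 F (f x) by apply: dF; rewrite !ltW.
  by rewrite derive1E derive_val.
Qed.

Lemma integral_cc_affine (p q al be : R) : p <= q ->
  (\int[mu]_(x in `[p, q]) (al * x + be)%:E =
   (al * (q ^+ 2 - p ^+ 2) / 2 + be * (q - p))%:E)%E.
Proof.
move=> pq.
have dF x : p <= x <= q ->
    is_derive x 1 (fun x => al * x ^+ 2 / 2 + be * x) (al * x + be).
  by move=> _; apply: is_derive_eq; rewrite /GRing.scale /=; field.
rewrite (integral_cc_is_derive pq dF) //.
by congr (_%:E); field.
Qed.

Lemma integral_cc_invsqr (p q A B : R) : 0 < p -> p <= q ->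
  (\int[mu]_(x in `[p, q]) (A * x ^- 2 + B)%:E =
   (A * (p^-1 - q^-1) + B * (q - p))%:E)%E.
Proof.
move=> p0 pq; have x0 x : p <= x -> x != 0 by move=> px; rewrite gt_eqF // (lt_le_trans p0 px).
have dF x : p <= x <= q ->
    is_derive x 1 (fun x => - A * x^-1 + B * x) (A * x ^- 2 + B).
  move=> /andP[/x0 xn0 _]; have := @is_deriveV R (fun x => x) x 1 1 xn0.
  by move=> dV; apply: is_derive_eq; rewrite /GRing.scale /=; field.
rewrite (integral_cc_is_derive pq dF); last first.
  move=> x /andP[/x0 xn0 _]; have x2 : x ^+ 2 != 0 by rewrite expf_neq0.
  by apply: derivableD => //; apply: derivableM.
by congr (_%:E); field; rewrite !x0.
Qed.

Lemma integral_oo_piecewise_affine (g : R -> R) (p1 p2 a1 b1 a2 b2 a3 b3 : R) :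
  -1 <= p1 -> p1 <= p2 -> p2 <= 1 -> measurable_fun setT g ->
  (forall x, -1 <= x <= p1 -> g x = a1 * x + b1) ->
  (forall x, p1 <= x <= p2 -> g x = a2 * x + b2) ->
  (forall x, p2 <= x <= 1 -> g x = a3 * x + b3) ->
  (\int[mu]_(x in `](-1)%R, 1%R[) (g x)%:E =
   (a1 * (p1 ^+ 2 - 1) / 2 + b1 * (p1 + 1) + (a2 * (p2 ^+ 2 - p1 ^+ 2) / 2 + b2 * (p2 - p1))
    + (a3 * (1 - p2 ^+ 2) / 2 + b3 * (1 - p2)))%:E)%E.
Proof.
move=> h1 h12 h2 mg g1 g2 g3.
have mgD D : measurable_fun D (EFin \o g).
  by apply: measurable_funS (_ : measurable_fun setT _) => //; exact/measurable_EFinP.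
have piece p q a b : p <= q -> (forall x, p <= x <= q -> g x = a * x + b) ->
    (\int[mu]_(x in `[p, q]) (g x)%:E = (a * (q ^+ 2 - p ^+ 2) / 2 + b * (q - p))%:E)%E.
  move=> pq gE; rewrite -integral_cc_affine //; apply: eq_integral => x.
  by rewrite inE /= in_itv /= => /gE ->.
rewrite -(@integral_itv_bndoo _ _ _ _ true false) ?mgD //.
rewrite (@integral_cc_split _ _ p1 _ h1 (le_trans h12 h2)) ?mgD //.
rewrite (@integral_cc_split _ p1 p2 _ h12 h2) ?mgD //.
rewrite (piece _ _ _ _ h1 g1) (piece _ _ _ _ h12 g2) (piece _ _ _ _ h2 g3) -!EFinD.
by congr (_%:E); rewrite sqrrN expr1n; ring.
Qed.

Lemma lee_sandwich_abs (x : \bar R) (l r : R) :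
  (l%:E <= x <= r%:E)%E -> (`|x - l%:E| <= (r - l)%:E)%E.
Proof.
case: x => [x| |] /andP[lx xr] //.
rewrite -EFinB lee_fin ler_norml; rewrite !lee_fin in lx xr; lra.
Qed.

End integration_tools.

Section Phi0_as_ramp.
Variable R : realType.
Implicit Types e w z : R.

Lemma Upsilon_1addr_div (D N : R) : 0 < D -> N < 0 ->
  Upsilon (1 + N / D) = Num.max 0 (D + N) / D.
Proof.
move=> D0 N0; have -> : 1 + N / D = (D + N) / D by field; rewrite gt_eqF.
rewrite /Upsilon pmulr_lle0 ?invr_gt0 //.
have [_|DN0] := leP (D + N) 0; first by rewrite mul0r.
by rewrite ltr_pdivrMr // mul1r ifT //; lra.
Qed.

(* For [w + z != 0] the argument of [Upsilon] in [Phi0] is [ramp / |w + z|];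
   [ramp] vanishes when [w] and [z] have opposite signs. *)
Definition ramp e w z : R := Num.max 0 (`|w + z| - Num.max `|w| `|z| + e - 1).

Lemma ramp_ge0 e w z : 0 <= ramp e w z.
Proof. by rewrite le_max lexx. Qed.

Lemma rampN e w z : ramp e (- w) (- z) = ramp e w z.
Proof. by rewrite /ramp -opprD !normrN. Qed.

Lemma rampE_ger0 e w z : e < 1 -> 0 <= w ->
  ramp e w z = Num.max 0 (Num.min w z + e - 1).
Proof.
move=> e1 w0; rewrite /ramp (ger0_norm w0).
have [z0|z0] := leP 0 z.
  rewrite ger0_norm ?addr_ge0 // (ger0_norm z0) -(addr_max_min w z).
  by congr (Num.max 0 _); ring.
have mz : Num.min w z <= z by rewrite ge_min lexx orbT.
have wzM : `|w + z| <= Num.max w `|z|.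
  rewrite ler_norml ltr0_norm //; apply/andP; split.
    by rewrite lerNl le_max; apply/orP; right; lra.
  by rewrite le_max; apply/orP; left; lra.
by rewrite [LHS]max_l ?[RHS]max_l //; lra.
Qed.

(* The case [w + z = 0] fits this formula because [_ / 0 = 0]. *)
Lemma Phi0E (eta w z : R) : 1 < eta ->
  Phi0 eta w z = 6 / pi ^+ 2 * (ramp eta^-1 w z / `|w + z|).
Proof.
move=> eta1; have e1 : eta^-1 < 1 by rewrite invf_lt1 // (lt_trans ltr01).
rewrite /Phi0 /ramp; case: eqVneq => [->|wz0] /=.
  by rewrite normr0 invr0 !mulr0 ifT //; have := normr_ge0 w; lra.
rewrite Upsilon_1addr_div ?normr_gt0 //; first by congr (_ * (Num.max 0 _ / _)); ring.
have : `|w| <= Num.max `|w| `|z| by rewrite le_max lexx.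
by have := normr_ge0 w; lra.
Qed.

Lemma ramp_gt0_norm e w z : 0 < ramp e w z -> 2 - 2 * e <= `|w + z|.
Proof.
rewrite /ramp lt_max ltxx /=.
have : `|w + z| <= 2 * Num.max `|w| `|z|.
  apply: le_trans (ler_normD _ _) _.
  by rewrite mulr2n mulrDl mul1r lerD // le_max lexx ?orbT.
lra.
Qed.

Lemma Phi0_sandwich (eta w z : R) : 2 <= eta -> -1 < w < 1 -> -1 < z < 1 ->
  6 / pi ^+ 2 / 2 * ramp eta^-1 w z <= Phi0 eta w z <=
  6 / pi ^+ 2 * (1 + 2 * eta^-1) / 2 * ramp eta^-1 w z.
Proof.
move=> eta2 /andP[w1 w2] /andP[z1 z2].
have eta0 : 0 < eta by apply: lt_le_trans eta2.
rewrite Phi0E ?(lt_le_trans _ eta2) ?ltr1n //.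
have e0 : 0 < eta^-1 by rewrite invr_gt0.
have e1 : eta^-1 <= 2^-1 by rewrite lef_pV2 // posrE.
have c0 : 0 <= 6 / pi ^+ 2 :> R by rewrite divr_ge0 // exprn_ge0 // ltW // pi_gt0.
move: e0 e1 c0; set e := eta^-1; set c := 6 / pi ^+ 2 => e0 e1 c0.
have [r0|r0] := eqVneq (ramp e w z) 0; first by rewrite r0 !(mul0r, mulr0) lexx.
have {}r0 : 0 < ramp e w z by rewrite lt_neqAle eq_sym r0 ramp_ge0.
have S_ge := ramp_gt0_norm r0.
have S_lt : `|w + z| < 2.
  have : `|w| < 1 by rewrite ltr_norml w1.
  have : `|z| < 1 by rewrite ltr_norml z1.
  by have := ler_normD w z; lra.
move: r0 S_ge S_lt; set r := ramp e w z; set S := `|w + z| => r0 S_ge S_lt.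
have S0 : 0 < S by lra.
have S_inv_lo : 2^-1 <= S^-1 by rewrite lef_pV2 ?posrE // ltW.
have S_inv_hi : S^-1 <= (1 + 2 * e) / 2 by rewrite -[S^-1]mul1r ler_pdivrMr //; nra.
have cr : 0 <= c * r by rewrite mulr_ge0 // ltW.
rewrite (_ : c / 2 * r = c * r * 2^-1); last by ring.
rewrite (_ : c * (r / S) = c * r * S^-1); last by ring.
rewrite (_ : c * (1 + 2 * e) / 2 * r = c * r * ((1 + 2 * e) / 2)); last by ring.
by rewrite !ler_wpM2l.
Qed.

End Phi0_as_ramp.

Section ramp_integral.
Variable R : realType.
Local Notation mu := (@lebesgue_measure R).

Definition ramp_mass (e a : R) : R := if a < e then (e ^+ 2 - a ^+ 2) / 2 else 0.

Lemma ramp_mass_ge0 (e a : R) : 0 <= a -> 0 <= ramp_mass e a.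
Proof.
move=> a0; rewrite /ramp_mass; case: ltP => // ae.
by apply: divr_ge0 => //; nra.
Qed.

Lemma measurable_ramp (k e w : R) : measurable_fun setT (fun z => k * ramp e w z).
Proof.
apply: measurable_funM => //; apply: measurable_maxr => //.
apply: measurable_funB => //; apply: measurable_funD => //.
apply: measurable_funB.
  by apply: measurableT_comp; [exact: normr_measurable | exact: measurable_funD].
by apply: measurable_maxr => //; exact: normr_measurable.
Qed.

Lemma integral_ramp (k e w : R) : 0 < e -> e <= 2^-1 -> -1 < w < 1 ->
  (\int[mu]_(z in `](-1)%R, 1%R[) (k * ramp e w z)%:E =
   (k * ramp_mass e (1 - `|w|))%:E)%E.
Proof.
move=> e0 e1 /andP[w1 w2]; have e1' : e < 1 by lra.
rewrite /ramp_mass; case: ltP => ae; last first.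
  rewrite mulr0 integral0_eq // => z _.
  rewrite /ramp max_l ?mulr0 //.
  have : `|w| <= Num.max `|w| `|z| by rewrite le_max lexx.
  have : `|z| <= Num.max `|w| `|z| by rewrite le_max lexx orbT.
  by have := ler_normD w z; lra.
(* For [w >= 0], [ramp e w] is [0], then [z + e - 1], then [w + e - 1] on the
   pieces cut at [1 - e] and [w]; the case [w < 0] is the mirror image. *)
have [w0|w0] := leP 0 w.
- move: ae; rewrite (ger0_norm w0) => ae.
  rewrite (@integral_oo_piecewise_affine _ (fun z => k * ramp e w z) (1 - e) w
    0 0 k (k * (e - 1)) 0 (k * (e - 1 + w)));
    [by congr (_%:E); field | lra | lra | lra | exact: measurable_ramp | | |].
  + move=> z /andP[_ z1]; rewrite rampE_ger0 // max_l ?mulr0 ?mul0r ?addr0 //.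
    have : Num.min w z <= z by rewrite ge_min lexx orbT.
    lra.
  + move=> z /andP[z1 z2]; rewrite rampE_ger0 // min_r // max_r; [ring | lra].
  + move=> z /andP[z1 z2]; rewrite rampE_ger0 // min_l // max_r; [ring | lra].
- move: ae; rewrite (ltr0_norm w0) => ae.
  rewrite (@integral_oo_piecewise_affine _ (fun z => k * ramp e w z) w (e - 1)
    0 (k * (e - 1 - w)) (- k) (k * (e - 1)) 0 0);
    [by congr (_%:E); field | lra | lra | lra | exact: measurable_ramp | | |].
  + move=> z /andP[z1 z2]; rewrite -rampN rampE_ger0 ?oppr_ge0 ?ltW // min_l ?lerN2 //.
    by rewrite max_r; [ring | lra].
  + move=> z /andP[z1 z2]; rewrite -rampN rampE_ger0 ?oppr_ge0 ?ltW // min_r ?lerN2 //.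
    by rewrite max_r; [ring | lra].
  + move=> z /andP[z1 z2].
    rewrite -rampN rampE_ger0 ?oppr_ge0 ?ltW // max_l ?mulr0 ?mul0r ?addr0 //.
    have : Num.min (- w) (- z) <= - z by rewrite ge_min lexx orbT.
    lra.
Qed.

Lemma ramp_mass_inv_eq0 (eta a : R) : 0 < eta -> 1 <= eta * a ->
  ramp_mass eta^-1 a = 0.
Proof.
move=> eta0 ea; rewrite /ramp_mass ifF //; apply/negbTE; rewrite -leNgt.
by rewrite -[eta^-1]mul1r ler_pdivrMr // mulrC.
Qed.

Lemma ramp_mass_invE (eta a : R) : 0 < eta -> 0 <= a -> eta * a <= 1 ->
  ramp_mass eta^-1 a = (eta ^- 2 - a ^+ 2) / 2.
Proof.
move=> eta0 a0 ea; rewrite /ramp_mass -exprVn.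
have ae : a <= eta^-1 by rewrite -[eta^-1]mul1r ler_pdivlMr // mulrC.
case: ltP => // ea'; have -> : a = eta^-1 by apply/le_anti; rewrite ae ea'.
by rewrite subrr mul0r.
Qed.

Lemma integral_ramp_mass (k xi a : R) : 0 < xi -> 0 < a ->
  (\int[mu]_(eta in `[xi, +oo[) (k * ramp_mass eta^-1 a)%:E =
   (k / 2 * Num.max 0 (1 - xi * a) ^+ 2 / xi)%:E)%E.
Proof.
move=> xi0 a0; have eta0 eta : `[xi, +oo[%classic eta -> 0 < eta.
  by rewrite /= in_itv /= andbT; exact: lt_le_trans.
have [xa|xa] := leP 1 (xi * a).
  rewrite max_l ?subr_le0 // expr0n mulr0 mul0r integral0_eq // => eta xieta.
  rewrite ramp_mass_inv_eq0 ?mulr0 ?eta0 //; apply: le_trans xa _.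
  by rewrite ler_pM2r //; move: xieta; rewrite /= in_itv /= andbT.
have xa' : xi <= a^-1 by rewrite -[a^-1]mul1r ler_pdivlMr // ltW.
rewrite max_r ?subr_ge0 ?ltW // (@integral_cinfty_cc _ _ _ a^-1); last first.
  move=> eta aeta; have eta0' : 0 < eta by apply: lt_trans aeta; rewrite invr_gt0.
  by rewrite ramp_mass_inv_eq0 ?mulr0 // -ler_pdivrMr // mul1r ltW.
transitivity (\int[mu]_(eta in `[xi, a^-1%R]) (k / 2 * eta ^- 2 + - (k / 2 * a ^+ 2))%:E)%E.
  apply: eq_integral => eta; rewrite inE /= in_itv /= => /andP[xe ea].
  have e0 : 0 < eta by apply: lt_le_trans xe.
  rewrite ramp_mass_invE ?(ltW a0) //; first by congr (_%:E); ring.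
  by rewrite -ler_pdivlMr // mul1r.
rewrite integral_cc_invsqr // invrK; congr (_%:E).
by field; rewrite !gt_eqF.
Qed.

End ramp_integral.

Section Phi_asymptotics.
Variable R : realType.
Local Notation mu := (@lebesgue_measure R).

Definition Phi_main (xi w : R) : R :=
  3 / (2 * pi ^+ 2) * Num.max 0 (1 - xi * (1 - `|w|)) ^+ 2 / xi.

Lemma Phi_mainE (xi w : R) :
  Phi_main xi w = 6 / pi ^+ 2 / 2 / 2 * Num.max 0 (1 - xi * (1 - `|w|)) ^+ 2 / xi.
Proof.
rewrite /Phi_main; congr (_ * _ / _).
by have := pi_gt0 R; move: (pi : R) => p p0; field; rewrite gt_eqF.
Qed.

Lemma integral_Phi0_sandwich (xi eta w : R) : 2 <= xi -> xi <= eta -> -1 < w < 1 ->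
  ((6 / pi ^+ 2 / 2 * ramp_mass eta^-1 (1 - `|w|))%:E <=
   \int[mu]_(z in `](-1)%R, 1%R[) (Phi0 eta w z)%:E <=
   (6 / pi ^+ 2 * (1 + 2 / xi) / 2 * ramp_mass eta^-1 (1 - `|w|))%:E)%E.
Proof.
move=> xi2 xieta hw; have eta2 := le_trans xi2 xieta.
have eta0 : 0 < eta by apply: lt_le_trans eta2.
have xi0 : 0 < xi by apply: lt_le_trans xi2.
have e0 : 0 < eta^-1 by rewrite invr_gt0.
have e1 : eta^-1 <= 2^-1 by rewrite lef_pV2 // posrE.
have c0 : 0 < 6 / pi ^+ 2 :> R by rewrite divr_gt0 // exprn_gt0 // pi_gt0.
have ramp_term_ge0 (k : R) z : 0 <= k -> (0 <= (k * ramp eta^-1 w z)%:E)%E.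
  by move=> k0; rewrite lee_fin mulr_ge0 ?ramp_ge0.
rewrite -!integral_ramp //; apply/andP; split.
  apply: ge0_le_integral_nonmeasurable => z; rewrite /= in_itv /= => hz.
    by apply: ramp_term_ge0; rewrite divr_ge0 ?ltW.
  by rewrite lee_fin; case/andP: (Phi0_sandwich eta2 hw hz).
apply: ge0_le_integral_nonmeasurable => z; rewrite /= in_itv /= => hz.
  apply: le_trans (ramp_term_ge0 (6 / pi ^+ 2 / 2) z _) _; first by rewrite divr_ge0 ?ltW.
  by rewrite lee_fin; case/andP: (Phi0_sandwich eta2 hw hz).
rewrite lee_fin; case/andP: (Phi0_sandwich eta2 hw hz) => _ /le_trans; apply.
rewrite ler_wpM2r ?ramp_ge0 // ler_pM2r ?invr_gt0 // ler_pM2l // lerD2l ler_pM2l //.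
by rewrite lef_pV2 ?posrE.
Qed.

Lemma Phi_sandwich (xi w : R) : 2 <= xi -> -1 < w < 1 ->
  ((Phi_main xi w)%:E <= Phi xi w <= ((1 + 2 / xi) * Phi_main xi w)%:E)%E.
Proof.
move=> xi2 hw.
have itv_ge eta : `[xi, +oo[%classic eta -> xi <= eta by rewrite /= in_itv /= andbT.
have xi0 : 0 < xi by apply: lt_le_trans xi2.
have a0 : 0 < 1 - `|w| by rewrite subr_gt0 ltr_norml.
have c0 : 0 <= 6 / pi ^+ 2 :> R by rewrite divr_ge0 // exprn_ge0 // ltW // pi_gt0.
have inner eta (xieta : `[xi, +oo[%classic eta) := integral_Phi0_sandwich xi2
  (itv_ge _ xieta) hw.
have lo_ge0 eta : (0 <= (6 / pi ^+ 2 / 2 * ramp_mass eta^-1 (1 - `|w|))%:E)%E.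
  by rewrite lee_fin mulr_ge0 //; [exact: divr_ge0 | exact/ramp_mass_ge0/ltW].
rewrite /Phi; apply/andP; split.
  rewrite Phi_mainE -integral_ramp_mass //; apply: ge0_le_integral_nonmeasurable => // eta xieta.
  by case/andP: (inner eta xieta).
rewrite Phi_mainE (_ : (1 + 2 / xi) * _ =
    6 / pi ^+ 2 * (1 + 2 / xi) / 2 / 2 * Num.max 0 (1 - xi * (1 - `|w|)) ^+ 2 / xi);
  last by ring.
rewrite -integral_ramp_mass //; apply: ge0_le_integral_nonmeasurable => eta xieta.
  by case/andP: (inner eta xieta) => /(le_trans (lo_ge0 eta)).
by case/andP: (inner eta xieta).
Qed.

Lemma Phi_main_gap (xi w : R) : 0 < xi -> `|w| <= 1 ->
  (1 + 2 / xi) * Phi_main xi w - Phi_main xi w <= 3 / pi ^+ 2 * xi ^- 2.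
Proof.
move=> xi0 w1.
have u0 : 0 <= xi * (1 - `|w|) by apply: mulr_ge0; [exact: ltW | rewrite subr_ge0].
have m1 : Num.max 0 (1 - xi * (1 - `|w|)) ^+ 2 <= 1.
  rewrite expr_le1 ?le_max ?lexx // ge_max ler01 /=; lra.
rewrite /Phi_main; move: m1 (pi_gt0 R); move: (Num.max _ _) (pi : R) => m p m1 p0.
rewrite (_ : _ - _ = 3 / p ^+ 2 * xi ^- 2 * m ^+ 2); last by field; rewrite !gt_eqF.
by rewrite ger_pMr // mulr_gt0 ?invr_gt0 ?exprn_gt0 // divr_gt0 ?exprn_gt0.
Qed.

End Phi_asymptotics.

Theorem mainTheorem3 (R : realType) :
  exists C : R, exists xi0 : R, 0 < xi0 /\
    forall xi w : R, xi0 <= xi -> -1 < w < 1 ->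
      let u := xi * (1 - `|w|) in
      (0 <= u < 1 ->
         (`| Phi xi w - (3 / (2 * pi ^+ 2) * (1 - u) ^+ 2 * xi^-1)%:E |
            <= (C * xi ^- 2)%:E)%E) /\
      (~~ (0 <= u < 1) -> Phi xi w = 0%E).
Proof.
exists (3 / pi ^+ 2), 2; split => [|xi w xi2 hw u]; first lra.
have xi0 : 0 < xi by apply: lt_le_trans xi2.
have w1 : `|w| <= 1 by case/andP: hw => ? ?; rewrite ler_norml; apply/andP; split; lra.
have PhiB := Phi_sandwich xi2 hw.
split => [/andP[_ u1]|].
- have PhiE : Phi_main xi w = 3 / (2 * pi ^+ 2) * (1 - u) ^+ 2 * xi^-1.
    by rewrite /Phi_main max_r // subr_ge0 ltW.
  by rewrite -PhiE; apply: le_trans (lee_sandwich_abs PhiB) _; rewrite lee_fin Phi_main_gap.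
- have u0 : 0 <= u by apply: mulr_ge0; [exact: ltW | rewrite subr_ge0].
  rewrite u0 /= -leNgt => u1.
  have PhiE : Phi_main xi w = 0 by rewrite /Phi_main max_l ?subr_le0 // expr0n /= mulr0 mul0r.
  by rewrite PhiE mulr0 in PhiB; apply/le_anti; rewrite andbC.
Qed.
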